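(* Let $M$ be a set of machines, $c\ge1$ a constant, $J$ a set of jobs with $|J|\le|M|^c$, and $L,l$ integers with $2|M|^c\ge L$ and $l\ge150c\ln|M|/\ln\ln|M|$. Then for every $s$, the number of bad patterns (for $M,L,l,J$) of size $s=\sum_{T,m}|B_{T,m}|$ is at most $2\exp\!\left(\frac{|J|\ln l}{8}\right)\left(\frac{eC(J)}{l}\right)^s$.
   Context: Jobs: each job $j$ has a machine sequence $\mathrm{seq}(j)\in M^*$ and a unique identifier. Standing assumption: $|M|\ge32$. $C(J)=\max_{m\in M}\sum_{j\in J}|\{i:\mathrm{seq}(j)_i=m\}|$. A bad pattern (for $M,L,l,J$) is a collection of sets $B_{T,m}$, for $0\le T<2L$ and $m\in M$, of (job, sequence position) pairs $(j,i)$, $j\in J$, such that $\mathrm{seq}(j)_i=m$ for all $(j,i)\in B_{T,m}$; each $j\in J$ appears at most once in $\bigsqcup B_{T,m}$; $|B_{T,m}|\in\{0\}\cup(l,|J|]$ for all $(T,m)$; and $\sum_{T,m}|B_{T,m}|>|J|/2$. *)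

From mathcomp Require Import all_boot all_order all_algebra.
From mathcomp Require Import reals exp sequences.
Set Implicit Arguments. Unset Strict Implicit. Unset Printing Implicit Defensive.
Import Order.TTheory GRing.Theory Num.Theory.

(* Sequence positions are natural numbers, taken
   in the finite range 'I_(maxlen sq) (every position i with i < size (sq j)
   lies there). *)
Section Jobs.
Variables (M J : finType) (sq : J -> seq M).

Definition maxlen : nat := \max_(j : J) size (sq j).

Definition CJ : nat := \max_(m : M) \sum_(j : J) count_mem m (sq j).

Definition pos := (J * 'I_maxlen)%type.

Definition pattern (L : nat) := {ffun 'I_(2 * L) * M -> {set pos}}.

Definition pattern_size L (B : pattern L) : nat := \sum_(Tm : 'I_(2 * L) * M) #|B Tm|.

Definition is_bad_pattern (L l : nat) (B : pattern L) : bool :=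
  [&&
      [forall Tm : 'I_(2 * L) * M, forall p : pos, (p \in B Tm) ==>
          ((p.2 : nat) < size (sq p.1)) && (nth Tm.2 (sq p.1) p.2 == Tm.2)],
      [forall j : J, \sum_(Tm : 'I_(2 * L) * M) #|[set p in B Tm | p.1 == j]| <= 1],
      [forall Tm : 'I_(2 * L) * M, (#|B Tm| == 0) || (l < #|B Tm| <= #|J|)]
    &
      #|J| < 2 * pattern_size B].

Definition num_bad_patterns (L l s : nat) : nat :=
  #|[set B : pattern L | is_bad_pattern l B && (pattern_size B == s)]|.
End Jobs.

From mathcomp Require Import all_boot all_order all_algebra.
From mathcomp Require Import reals exp sequences.
From mathcomp Require Import ring lra.
Import Order.TTheory GRing.Theory Num.Theory.
Set Implicit Arguments. Unset Strict Implicit. Unset Printing Implicit Defensive.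

(* The count is controlled by a generating function.  For x >= 0, the number of
   bad patterns of size s times x^s is at most the product, over the 2L|M|
   cells (T, m), of the sum of x^|A| over the admissible A: either empty or a
   set of more than l positions carrying machine m, of which there are at most
   C(J).  With x = l t / (e C(J)) and t = l^(-1/8), the bound
   C(n, b) <= (e n / b)^b gives C(n, b) x^b <= t^b for b >= l, so each factor
   is at most 1 + t^l and the product at most exp (2 L |M| l^(-l/8)) <= 2; this
   last step is where the lower bound on l enters.  Hence the count is at most
   2 x^(-s) = 2 l^(s/8) (e C(J) / l)^s, and s <= |J|. *)

Lemma ffact_le_expn n m : n ^_ m <= n ^ m.
Proof.
have -> : n ^ m = \prod_(i < m) n by rewrite prod_nat_const card_ord.
by rewrite ffact_prod; apply: leq_prod => i _; apply: leq_subr.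
Qed.

Lemma sum_nth_eq_count (T : eqType) (x0 x : T) (s : seq T) n : size s <= n ->
  \sum_(i < n) ((i < size s) && (nth x0 s i == x)) = count_mem x s.
Proof.
move=> s_le.
rewrite (eq_bigr (fun i : 'I_n => if i < size s then nat_of_bool (nth x0 s i == x)
                                   else 0)); last by move=> i _; case: ifP.
rewrite -big_mkcond -(big_ord_widen _ (fun i => nat_of_bool (nth x0 s i == x)) s_le).
rewrite -sum1_count (big_nth x0) big_mkord [RHS]big_mkcond.
by apply: eq_bigr => i _; rewrite /pred1 /=; case: (_ == _).
Qed.

Local Open Scope ring_scope.

Section RealBounds.
Variable R : realType.
Implicit Types (x t : R) (n b : nat).

Lemma expR1_ge2 : 2 <= expR 1 :> R.
Proof. by have := expR_ge1Dx (1 : R); rewrite (_ : 1 + 1 = 2). Qed.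

Lemma expR_half_le2 : expR 2^-1 <= 2 :> R.
Proof.
have h : 2^-1 <= expR (- 2^-1) :> R by have := expR_ge1Dx (- 2^-1 : R); lra.
rewrite -[expR _]invrK -expRN -[X in _ <= X]invrK.
by rewrite lef_pV2 ?posrE ?expR_gt0 //; lra.
Qed.

Lemma expR1_le4 : expR 1 <= 4 :> R.
Proof.
have -> : expR 1 = expR 2^-1 ^+ 2 :> R by rewrite -expRM_natl mulfV // pnatr_eq0.
rewrite (_ : 4 = 2 ^+ 2); last lra.
by apply: lerXn2r; rewrite ?nnegrE ?expR_ge0 ?expR_half_le2.
Qed.

Lemma expR1_mul_le_expR x : expR 1 * x <= expR x.
Proof.
have -> : expR x = expR 1 * expR (x - 1) by rewrite -expRD addrC subrK.
rewrite ler_pM2l ?expR_gt0 //.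
by have := expR_ge1Dx (x - 1); rewrite addrC subrK.
Qed.

Lemma expR3_ge8 : 8 <= expR 3 :> R.
Proof.
rewrite -[3]mulr1 expRM_natl (_ : 8 = 2 ^+ 3); last lra.
by apply: lerXn2r; rewrite ?nnegrE ?expR_ge0 ?expR1_ge2.
Qed.

Lemma expr1D_le_expR x n : -1 <= x -> (1 + x) ^+ n <= expR (n%:R * x).
Proof.
move=> x_ge; rewrite expRM_natl.
by apply: lerXn2r; rewrite ?nnegrE ?expR_ge0 ?expR_ge1Dx //; lra.
Qed.

Lemma threshold_mul_ln (A c lr : R) : 1 < A -> 1 <= c ->
  150 * c * A / ln A <= lr -> 300 * c <= lr /\ 75 * c * A <= lr * ln lr.
Proof.
move=> A_gt1 c_ge1; rewrite -mulrA; set y := ln A; set Q := A / y => lr_ge.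
have y_gt0 : 0 < y := ln_gt0 A_gt1.
have A_eq : A = expR (y / 2) * expR (y / 2).
  by rewrite -expRD -splitr lnK // posrE; lra.
have e_ge2 := expR1_ge2.
have A_ge : 2 * y <= A.
  by rewrite A_eq -expRD -splitr; have := expR1_mul_le_expR y; nra.
have y_le : y <= expR (y / 2) by have := expR1_mul_le_expR (y / 2); nra.
have Q_ge2 : 2 <= Q by rewrite /Q ler_pdivlMr.
have Q_ge : expR (y / 2) <= Q.
  by rewrite /Q ler_pdivlMr // A_eq ler_pM2l ?expR_gt0.
have ln_lr_ge : y / 2 <= ln lr.
  by rewrite -[y / 2]expRK ler_ln ?posrE ?expR_gt0; nra.
have -> : 75 * c * A = 150 * c * Q * (y / 2) by rewrite /Q; field; lra.
split; first nra.
have : 0 <= (lr - 150 * c * Q) * ln lr by apply: mulr_ge0; nra.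
have : 0 <= 150 * c * Q * (ln lr - y / 2) by apply: mulr_ge0; nra.
nra.
Qed.

Lemma threshold_tail (a c Lr lr : R) : 32 <= a -> 1 <= c -> Lr <= 2 * a `^ c ->
  150 * c * ln a / ln (ln a) <= lr ->
  256 <= lr /\ 2 * Lr * a * expR (- (lr * ln lr / 8)) <= 2^-1.
Proof.
move=> a_ge c_ge1 Lr_le lr_ge; have a_gt0 : 0 < a by lra.
have A_gt1 : 1 < ln a.
  by rewrite -[1]expRK ltr_ln ?posrE ?expR_gt0 //; have := expR1_le4; lra.
have [lr_ge300c lr_ln_ge] := threshold_mul_ln A_gt1 c_ge1 lr_ge.
split; first nra.
set E := expR (- (lr * ln lr / 8)).
have tail_le : 4 * a `^ c * a * E <= 2^-1.
  have -> : 4 * a `^ c * a * E = 4 * expR (c * ln a + ln a - lr * ln lr / 8).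
    by rewrite /powR gt_eqF // !expRD (lnK a_gt0) !mulrA.
  have exp_le : c * ln a + ln a - lr * ln lr / 8 <= -3.
    have : 0 <= (ln a - 1) * (c - 1) by apply: mulr_ge0; lra.
    nra.
  have : expR (-3) <= 8^-1 :> R.
    by rewrite expRN lef_pV2 ?posrE ?expR_gt0 ?expR3_ge8 //; lra.
  by rewrite -ler_expR in exp_le; lra.
have : 0 <= (2 * a `^ c - Lr) * (a * E).
  by apply: mulr_ge0; [lra | rewrite mulr_ge0 ?expR_ge0 //; lra].
nra.
Qed.

Lemma expR_ln_div8_ge2 x : 256 <= x -> 2 <= expR (ln x / 8).
Proof.
move=> x_ge; have x8 : expR (ln x / 8) ^+ 8 = x.
  by rewrite -expRM_natl mulrC divfK ?pnatr_eq0 // lnK // posrE; lra.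
by rewrite -(@ler_pXn2r _ 8) ?nnegrE ?expR_ge0 // x8; apply: le_trans x_ge; lra.
Qed.

Lemma pow_self_le_expR_fact b : b%:R ^+ b <= expR 1 ^+ b * b`!%:R :> R.
Proof.
case: b => [|b]; first by rewrite !expr0 fact0 mul1r.
have := expR_ge1Dxn b (ler0n R b.+1).
rewrite -[X in expR X]mulr1 expRM_natl -ler_pdivrMr ?ltr0n ?fact_gt0 //.
lra.
Qed.

Lemma bin_le_expR1_pow n b : 'C(n, b)%:R <= (expR 1 * n%:R / b%:R) ^+ b :> R.
Proof.
case: b => [|b]; first by rewrite bin0 !expr0.
have bin_fact : 'C(n, b.+1)%:R * b.+1`!%:R <= n%:R ^+ b.+1 :> R.
  by rewrite -natrM -natrX bin_ffact ler_nat ffact_le_expn.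
rewrite expr_div_n exprMn ler_pdivlMr ?exprn_gt0 ?ltr0n //.
apply: le_trans (ler_wpM2l (ler0n _ _) (pow_self_le_expR_fact b.+1)) _.
by rewrite mulrCA ler_wpM2l ?exprn_ge0 ?expR_ge0.
Qed.

Lemma bin_mul_pow_le n C b l t : (n <= C)%N -> (0 < C)%N -> (l <= b)%N -> 0 <= t ->
  'C(n, b)%:R * (l%:R * t / (expR 1 * C%:R)) ^+ b <= t ^+ b.
Proof.
move=> n_le C_gt0 + t_ge0; case: b => [|b] l_le; first by rewrite bin0 !expr0 mul1r.
have base_ge0 : 0 <= l%:R * t / (expR 1 * C%:R).
  by rewrite divr_ge0 ?mulr_ge0 ?expR_ge0.
apply: le_trans (ler_wpM2r (exprn_ge0 _ base_ge0) (bin_le_expR1_pow n b.+1)) _.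
have e_gt0 := expR_gt0 (1 : R).
rewrite -exprMn.
have -> : expR 1 * n%:R / b.+1%:R * (l%:R * t / (expR 1 * C%:R)) =
          n%:R / C%:R * (l%:R / b.+1%:R) * t.
  by field; rewrite nat1r !pnatr_eq0 (gt_eqF e_gt0) -!lt0n C_gt0.
have ratio_le1 p q : (p <= q)%N -> (0 < q)%N -> p%:R / q%:R <= 1 :> R.
  by move=> pq q_gt0; rewrite ler_pdivrMr ?ltr0n // mul1r ler_nat.
apply: lerXn2r; rewrite ?nnegrE ?mulr_ge0 ?invr_ge0 //.
by rewrite ler_piMl // mulr_ile1 ?divr_ge0 ?ratio_le1.
Qed.

Lemma sum_tail_geometric_le l N t : 0 < t -> 2 * t <= 1 ->
  \sum_(b < N) (l < b)%:R * t ^+ b <= t ^+ l.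
Proof.
move=> t_gt0 t_le; rewrite -(big_mkord xpredT (fun b => (l < b)%:R * t ^+ b)).
apply: le_trans (_ : \sum_(0 <= b < l.+1 + N) (l < b)%:R * t ^+ b <= _).
  rewrite (big_cat_nat (leq0n N) (leq_addl l.+1 N)) /= lerDl.
  by apply: sumr_ge0 => b _; rewrite mulr_ge0 ?exprn_ge0 // ltW.
rewrite (big_cat_nat (leq0n l.+1) (leq_addr N l.+1)) /= big_nat_cond big1 ?add0r.
  rewrite (eq_big_nat _ _ (F2 := fun b => t ^+ b)); last first.
    by move=> b /andP[lb _]; rewrite lb mul1r.
  rewrite geometric_partial_tail.
  apply: le_trans (geometric_le_lim _ (exprn_ge0 _ (ltW t_gt0)) t_gt0 _) _.
    by rewrite ger0_norm ?ltW //; lra.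
  rewrite exprS ler_pdivrMr; last lra.
  have := exprn_gt0 l t_gt0; nra.
by move=> b /andP[/andP[_ bl] _]; rewrite ltnNge -ltnS bl mul0r.
Qed.

End RealBounds.

Lemma sum_subset_card (V : nmodType) (T : finType) (P : {set T}) (F : nat -> V) :
  \sum_(A : {set T} | A \subset P) F #|A| = \sum_(b < #|P|.+1) F b *+ 'C(#|P|, b).
Proof.
rewrite (partition_big (fun A : {set T} => inord #|A| : 'I_#|P|.+1) xpredT) //=.
apply: eq_bigr => b _; rewrite -cards_draws -sumr_const.
apply: eq_big => [A | A /andP[AP /eqP <-]];
  last by rewrite inordK // ltnS subset_leq_card.
rewrite inE; apply: andb_id2l => AP.
by rewrite -(inj_eq val_inj) /= inordK // ltnS subset_leq_card.
Qed.

Section BadPatterns.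
Variables (M J : finType) (sq : J -> seq M).

Definition machine_positions (m : M) : {set pos sq} :=
  [set p : pos sq | (p.2 < size (sq p.1))%N && (nth m (sq p.1) p.2 == m)].

Lemma card_machine_positions m : (#|machine_positions m| <= CJ sq)%N.
Proof.
pose F j (i : 'I_(maxlen sq)) := nat_of_bool ((j, i) \in machine_positions m).
apply: leq_trans (leq_bigmax m); rewrite -sum1_card big_mkcond /=.
rewrite (eq_bigr (fun p => F p.1 p.2)); last by case.
rewrite -(pair_bigA _ F) leq_sum // => j _.
have len_le : (size (sq j) <= maxlen sq)%N by apply: leq_bigmax.
rewrite -(sum_nth_eq_count m m len_le); apply/eq_leq/eq_bigr => i _.
by rewrite /F inE.
Qed.

Definition admissible (l : nat) (m : M) (A : {set pos sq}) : bool :=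
  (A \subset machine_positions m) && ((#|A| == 0)%N || (l < #|A|)%N).

Variables (L l : nat).
Implicit Type B : pattern sq L.

Lemma bad_pattern_admissible B k : is_bad_pattern l B -> admissible l k.2 (B k).
Proof.
case/and4P => /forallP/(_ k)/forallP on_machine _ /forallP/(_ k) card_B _.
apply/andP; split; last by case/orP: card_B => [-> | /andP[-> _]]; rewrite ?orbT.
by apply/subsetP => p /(implyP (on_machine p)); rewrite inE.
Qed.

Lemma bad_pattern_size_le B : is_bad_pattern l B -> (pattern_size B <= #|J|)%N.
Proof.
case/and4P => _ /forallP once _ _.
have card_split (A : {set pos sq}) : #|A| = (\sum_j #|[set p in A | p.1 == j]|)%N.
  rewrite -sum1_card (partition_big (fun p : pos sq => p.1) xpredT) //=.
  by apply: eq_bigr => j _; rewrite -sum1_card; apply: eq_bigl => p; rewrite inE.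
rewrite /pattern_size (eq_bigr _ (fun k _ => card_split (B k))) exchange_big /=.
by rewrite -sum1_card; apply: leq_sum => j _; apply: once.
Qed.

Lemma bad_pattern_CJ_gt0 B : is_bad_pattern l B -> (0 < CJ sq)%N.
Proof.
move=> badB; have /and4P[_ _ _ size_gt] := badB.
have [k Bk_gt0] : exists k, (0 < #|B k|)%N.
  apply/existsP; apply: contraLR size_gt => /existsPn B_empty.
  rewrite /pattern_size big1 ?muln0 // => k _.
  by apply/eqP; rewrite -leqn0 leqNgt B_empty.
apply: leq_trans (card_machine_positions k.2).
apply: leq_trans Bk_gt0 (subset_leq_card _).
by case/andP: (bad_pattern_admissible k badB).
Qed.

Variable R : realType.

Lemma sum_admissible_eq m (x : R) :
  \sum_(A : {set pos sq}) (admissible l m A)%:R * x ^+ #|A| =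
  1 + \sum_(b < #|machine_positions m|.+1)
        'C(#|machine_positions m|, b)%:R * ((l < b)%:R * x ^+ b).
Proof.
rewrite (bigD1 set0) //= /admissible sub0set cards0 mul1r expr0; congr (_ + _).
transitivity (\sum_(A : {set pos sq} | A \subset machine_positions m)
                (l < #|A|)%:R * x ^+ #|A|).
  rewrite big_mkcond [RHS]big_mkcond; apply: eq_bigr => A _ /=.
  have [-> | A_neq0] := eqVneq A set0; first by rewrite sub0set cards0 mul0r.
  by rewrite cards_eq0 (negbTE A_neq0) /=; case: (A \subset _); rewrite ?mul0r.
rewrite (sum_subset_card _ (fun b => (l < b)%:R * x ^+ b)).
by apply: eq_bigr => b _; rewrite [RHS]mulr_natl.
Qed.

Lemma sum_admissible_le m (t : R) : 0 < t -> 2 * t <= 1 -> (0 < CJ sq)%N ->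
  \sum_(A : {set pos sq})
     (admissible l m A)%:R * (l%:R * t / (expR 1 * (CJ sq)%:R)) ^+ #|A| <= 1 + t ^+ l.
Proof.
move=> t_gt0 t_le C_gt0; rewrite sum_admissible_eq lerD2l.
apply: le_trans (sum_tail_geometric_le l _ t_gt0 t_le); apply: ler_sum => b _.
case: ltnP => [l_lt | _]; last by rewrite !mul0r mulr0.
rewrite !mul1r.
exact: bin_mul_pow_le (card_machine_positions m) C_gt0 (ltnW l_lt) (ltW t_gt0).
Qed.

(* Expanding the product gives one term per family B : pattern sq L, and each
   bad pattern of size s contributes x ^+ s. *)
Lemma num_bad_patterns_gf s (x : R) : 0 <= x ->
  (num_bad_patterns sq L l s)%:R * x ^+ s <=
  \prod_(k : 'I_(2 * L) * M) \sum_(A : {set pos sq}) (admissible l k.2 A)%:R * x ^+ #|A|.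
Proof.
move=> x_ge0; rewrite bigA_distr_bigA /=.
rewrite /num_bad_patterns mulrC mulr_natr -sumr_const [X in X <= _]big_mkcond /=.
apply: ler_sum => B _; case: ifP => [|_]; last first.
  by apply: prodr_ge0 => k _; rewrite mulr_ge0 ?ler0n ?exprn_ge0.
rewrite inE => /andP[badB /eqP <-].
rewrite (eq_bigr (fun k => x ^+ #|B k|)); last first.
  by move=> k _; rewrite bad_pattern_admissible // mul1r.
by rewrite prodrXr.
Qed.

Lemma num_bad_patterns_mul_le s (t : R) : 0 < t -> 2 * t <= 1 -> (0 < CJ sq)%N ->
  (num_bad_patterns sq L l s)%:R * (l%:R * t / (expR 1 * (CJ sq)%:R)) ^+ s <=
  (1 + t ^+ l) ^+ (2 * L * #|M|).
Proof.
move=> t_gt0 t_le C_gt0.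
have x_ge0 : 0 <= l%:R * t / (expR 1 * (CJ sq)%:R).
  by rewrite divr_ge0 ?mulr_ge0 ?expR_ge0 // ltW.
apply: le_trans (num_bad_patterns_gf s x_ge0) _.
have -> : (2 * L * #|M|)%N = #|{: 'I_(2 * L) * M}| by rewrite card_prod card_ord.
rewrite -prodr_const; apply: ler_prod => k _; rewrite sum_admissible_le // andbT.
by apply: sumr_ge0 => A _; rewrite mulr_ge0 ?exprn_ge0.
Qed.

Lemma num_bad_patterns_le s (r : R) : 2 <= r -> (0 < l)%N ->
  (2 * L * #|M|)%:R * r^-1 ^+ l <= 2^-1 ->
  (num_bad_patterns sq L l s)%:R <= 2 * r ^+ #|J| * (expR 1 * (CJ sq)%:R / l%:R) ^+ s.
Proof.
move=> r_ge2 l_gt0 tail_le; set nb := num_bad_patterns sq L l s; set C := CJ sq.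
have [r_gt0 t_gt0] : 0 < r /\ 0 < r^-1 by rewrite invr_gt0; split; lra.
have [-> | ] := posnP nb.
  have base_ge0 : 0 <= expR 1 * C%:R / l%:R :> R by rewrite divr_ge0 ?mulr_ge0 ?expR_ge0.
  by rewrite !mulr_ge0 ?exprn_ge0 // ltW.
rewrite /nb card_gt0 => /set0Pn[B]; rewrite inE => /andP[badB /eqP size_B].
have C_gt0 : (0 < C)%N := bad_pattern_CJ_gt0 badB.
have t_le : 2 * r^-1 <= 1 by rewrite ler_pdivrMr // mul1r.
pose x : R := l%:R * r^-1 / (expR 1 * C%:R).
have x_gt0 : 0 < x by rewrite /x divr_gt0 ?mulr_gt0 ?invr_gt0 ?expR_gt0 ?ltr0n.
have nb_x_le : nb%:R * x ^+ s <= 2.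
  apply: le_trans (num_bad_patterns_mul_le s t_gt0 t_le C_gt0) _.
  apply: le_trans (expr1D_le_expR _ _) _; first by have := exprn_ge0 l (ltW t_gt0); lra.
  by apply: le_trans (expR_half_le2 R); rewrite ler_expR.
have x_inv : x^-1 = expR 1 * C%:R / l%:R * r.
  rewrite /x; field.
  by rewrite (gt_eqF r_gt0) (gt_eqF (expR_gt0 1)) !pnatr_eq0 -!lt0n l_gt0 C_gt0.
rewrite -ler_pdivlMr ?exprn_gt0 // -exprVn x_inv exprMn in nb_x_le.
apply: le_trans nb_x_le _; rewrite -[X in _ <= X]mulrA ler_pM2l ?ltr0n // mulrC.
rewrite ler_wpM2r ?exprn_ge0 ?divr_ge0 ?mulr_ge0 ?expR_ge0 // ler_eXn2l; last lra.
by rewrite -size_B (bad_pattern_size_le badB).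
Qed.

End BadPatterns.

Theorem lemma5p16 (R : realType) (M J : finType) (sq : J -> seq M)
  (c : R) (L l s : nat) :
  (32 <= #|M|)%N ->
  1 <= c ->
  (#|J|%:R : R) <= powR (#|M|%:R) c ->
  (L%:R : R) <= 2 * powR (#|M|%:R) c ->
  150 * c * ln (#|M|%:R) / ln (ln (#|M|%:R)) <= (l%:R : R) ->
  ((num_bad_patterns sq L l s)%:R : R) <=
    2 * expR (#|J|%:R * ln (l%:R) / 8) * (expR 1 * (CJ sq)%:R / l%:R) ^+ s.
Proof.
move=> M_ge32 c_ge1 _ L_le l_ge.
have M_ge32R : 32 <= #|M|%:R :> R by rewrite (ler_nat R 32).
have [l_ge256 tail_le] := threshold_tail M_ge32R c_ge1 L_le l_ge.
have l_gt0 : (0 < l)%N by rewrite -(ltr0n R); lra.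
have r_tail : (2 * L * #|M|)%:R * (expR (ln l%:R / 8))^-1 ^+ l <= 2^-1 :> R.
  by rewrite -expRN -expRM_natl mulrN mulrA !natrM.
apply: le_trans (num_bad_patterns_le sq s (expR_ln_div8_ge2 l_ge256) l_gt0 r_tail) _.
by rewrite -expRM_natl mulrA.
Qed.
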